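(* Let $U,V$ be bialgebras and $\langle\,,\rangle:U\otimes V\to k$ a pairing which is convolution invertible when regarded as an element $\rho$ of ${\rm Hom}(U^{\rm cop}\otimes V,k)$; let $\rho^{-1}$ be its convolution inverse there. Let $D=D(U^{\rm cop},V)$, $i:U^{\rm cop}\to D$, $i(m)=m\otimes 1$, and $j:V\to D$, $j(x)=1\otimes x$. (i) There exists a bialgebra map $\pi:D\to U^{\rm cop}$ with $\pi\circ i={\rm Id}$ if and only if there exists a bialgebra map $\gamma:V\to U^{\rm cop}$ such that for all $y\in V$, $m\in U$, $$\gamma(y)m=\rho^{-1}(m_1,y_3)\rho(m_3,y_1)\,m_2\gamma(y_2).$$ (ii) There exists a bialgebra map $D\to V$ which is a left inverse of $j$ if and only if there is a bialgebra map $\mu:U^{\rm cop}\to V$ such that for all $y\in V$, $m\in U$, $y\mu(m)=\rho^{-1}(m_1,y_3)\rho(m_3,y_1)\mu(m_2)y_2$. If $U,V$ are Hopf algebras, these maps are Hopf algebra morphisms. (In (i), $\pi(m\otimes x)=m\gamma(x)$ and $\gamma=\pi\circ j$.)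
   Context: Sweedler notation is used, subscripts always referring to comultiplication in $U$ or $V$ (not in $U^{\rm cop}$). A pairing satisfies $\langle mn,x\rangle=\langle m,x_1\rangle\langle n,x_2\rangle$, $\langle m,xy\rangle=\langle m_1,x\rangle\langle m_2,y\rangle$, $\langle 1,x\rangle=\varepsilon(x)$, $\langle m,1\rangle=\varepsilon(m)$. $D(U^{\rm cop},V)$ is the bialgebra with underlying space $U\otimes V$, unit $1\otimes 1$, counit $\varepsilon\otimes\varepsilon$, comultiplication $\Delta(m\otimes x)=(m_2\otimes x_1)\otimes(m_1\otimes x_2)$ and multiplication $(m\otimes x)(n\otimes y)=\rho(n_3,x_1)\rho^{-1}(n_1,x_3)\,mn_2\otimes x_2y$. Here $U^{\rm cop}$ is $U$ with the opposite comultiplication. *)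

(* Bialgebras over a field k, encoded without a tensor-product
   library: an element of A (x) B is represented by a finite list of pairs
   (a finite sum of pure tensors); two such representatives are equal as
   tensors iff every bilinear form A x B -> k takes the same value on them
   (over a field, linear forms separate points of A (x) B). *)
From HB Require Import structures.
From mathcomp Require Import all_boot all_order all_algebra.
Set Implicit Arguments. Unset Strict Implicit. Unset Printing Implicit Defensive.
Import Order.TTheory GRing.Theory Num.Theory.
Local Open Scope ring_scope.

Section Bialg.
Variable k : fieldType.

Definition bilinf (A B : lmodType k) (f : A -> B -> k) : Prop :=
  (forall c a a' b, f (c *: a + a') b = c * f a b + f a' b) /\
  (forall c a b b', f a (c *: b + b') = c * f a b + f a b').

Definition trilinf (A B C : lmodType k) (f : A -> B -> C -> k) : Prop :=
  (forall c a a' b x, f (c *: a + a') b x = c * f a b x + f a' b x) /\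
  (forall c a b b' x, f a (c *: b + b') x = c * f a b x + f a b' x) /\
  (forall c a b x x', f a b (c *: x + x') = c * f a b x + f a b x').

Definition bilin (A B W : lmodType k) (f : A -> B -> W) : Prop :=
  (forall c a a' b, f (c *: a + a') b = c *: f a b + f a' b) /\
  (forall c a b b', f a (c *: b + b') = c *: f a b + f a b').

Definition lin (A W : lmodType k) (f : A -> W) : Prop :=
  forall c a a', f (c *: a + a') = c *: f a + f a'.

Definition linf (A : lmodType k) (f : A -> k) : Prop :=
  forall c a a', f (c *: a + a') = c * f a + f a'.

Definition teq2 (A B : lmodType k) (s t : seq (A * B)) : Prop :=
  forall f : A -> B -> k, bilinf f ->
    \sum_(p <- s) f p.1 p.2 = \sum_(p <- t) f p.1 p.2.

Definition teq3 (A B C : lmodType k) (s t : seq (A * B * C)) : Prop :=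
  forall f : A -> B -> C -> k, trilinf f ->
    \sum_(p <- s) f p.1.1 p.1.2 p.2 = \sum_(p <- t) f p.1.1 p.1.2 p.2.

(* A comultiplication on A is a map d : A -> seq (A * A);
   d x = [:: (a_i, b_i)] stands for Delta x = sum_i a_i (x) b_i,
   i.e. in Sweedler notation x_1 (x) x_2 ranges over the pairs (p.1, p.2). *)

Definition cop (A : Type) (d : A -> seq (A * A)) (x : A) : seq (A * A) :=
  [seq (p.2, p.1) | p <- d x].

(* x_1 (x) x_2 (x) x_3 = (Delta (x) id) Delta x, as triples ((x_1, x_2), x_3) *)
Definition sw3 (A : Type) (d : A -> seq (A * A)) (x : A) : seq (A * A * A) :=
  [seq (q.1, q.2, p.2) | p <- d x, q <- d p.1].

Definition is_bialg (A : algType k) (d : A -> seq (A * A)) (e : A -> k) : Prop :=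
  (forall c x y, teq2 (d (c *: x + y)) ([seq (c *: p.1, p.2) | p <- d x] ++ d y)) /\
  (forall x, teq3 (sw3 d x) [seq (p.1, q.1, q.2) | p <- d x, q <- d p.2]) /\
  (forall x, \sum_(p <- d x) e p.1 *: p.2 = x) /\
  (forall x, \sum_(p <- d x) e p.2 *: p.1 = x) /\
  linf e /\
  (forall x y, teq2 (d (x * y)) [seq (p.1 * q.1, p.2 * q.2) | p <- d x, q <- d y]) /\
  teq2 (d 1) [:: (1, 1)] /\
  (forall x y, e (x * y) = e x * e y) /\
  e 1 = 1.

Definition bialg_map (A B : algType k) (dA : A -> seq (A * A)) (eA : A -> k)
    (dB : B -> seq (B * B)) (eB : B -> k) (f : A -> B) : Prop :=
  lin f /\
  (forall x y, f (x * y) = f x * f y) /\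
  f 1 = 1 /\
  (forall x, eB (f x) = eA x) /\
  (forall x, teq2 (dB (f x)) [seq (f p.1, f p.2) | p <- dA x]).

Definition is_pairing (U V : algType k) (dU : U -> seq (U * U)) (eU : U -> k)
    (dV : V -> seq (V * V)) (eV : V -> k) (rho : U -> V -> k) : Prop :=
  bilinf rho /\
  (forall m n x, rho (m * n) x = \sum_(q <- dV x) rho m q.1 * rho n q.2) /\
  (forall m x y, rho m (x * y) = \sum_(p <- dU m) rho p.1 x * rho p.2 y) /\
  (forall x, rho 1 x = eV x) /\
  (forall m, rho m 1 = eU m).

(* convolution in Hom(U^cop (x) V, k):
   (r * s)(m (x) x) = r(m_2, x_1) s(m_1, x_2) *)
Definition conv (U V : lmodType k) (dU : U -> seq (U * U)) (dV : V -> seq (V * V))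
    (r s : U -> V -> k) (m : U) (x : V) : k :=
  \sum_(p <- dU m) \sum_(q <- dV x) r p.2 q.1 * s p.1 q.2.

Definition conv_inverse (U V : lmodType k) (dU : U -> seq (U * U)) (eU : U -> k)
    (dV : V -> seq (V * V)) (eV : V -> k) (rho rinv : U -> V -> k) : Prop :=
  bilinf rinv /\
  (forall m x, conv dU dV rho rinv m x = eU m * eV x) /\
  (forall m x, conv dU dV rinv rho m x = eU m * eV x).

(* A linear map D(U^cop,V) = U (x) V -> W is the same as a bilinear map
   P : U -> V -> W (P m x = image of m (x) x).  [D_bialg_map ... P] says that
   the induced linear map D -> W is a bialgebra map, where D has unit 1 (x) 1,
   counit eps (x) eps, comultiplication
     Delta(m (x) x) = (m_2 (x) x_1) (x) (m_1 (x) x_2)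
   and multiplication
     (m (x) x)(n (x) y) = rho(n_3,x_1) rho^-1(n_1,x_3) m n_2 (x) x_2 y.
   Since all structure maps of D are (bi)linear extensions of their values on
   pure tensors, it suffices to test on pure tensors. *)
Definition D_bialg_map (U V : algType k) (dU : U -> seq (U * U)) (eU : U -> k)
    (dV : V -> seq (V * V)) (eV : V -> k) (rho rinv : U -> V -> k)
    (W : algType k) (dW : W -> seq (W * W)) (eW : W -> k) (P : U -> V -> W) : Prop :=
  bilin P /\
  P 1 1 = 1 /\
  (forall m x n y,
      P m x * P n y =
      \sum_(t <- sw3 dU n) \sum_(s <- sw3 dV x)
         (rho t.2 s.1.1 * rinv t.1.1 s.2) *: P (m * t.1.2) (s.1.2 * y)) /\
  (forall m x, eW (P m x) = eU m * eV x) /\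
  (forall m x, teq2 (dW (P m x))
                    [seq (P p.2 q.1, P p.1 q.2) | p <- dU m, q <- dV x]).

End Bialg.

(* Elements of a tensor product are only accessible through bilinear forms, so the first
   ingredient is that linear forms separate the points of a vector space (Zorn's lemma on
   graphs of partial linear forms); it turns the scalar tensor identities of the
   hypotheses into identities between vector-valued sums.
   In D = D(U^cop, V) one has (m ⊗ 1)(1 ⊗ x) = m ⊗ x, so a bialgebra map P out of D is
   determined by α = P ∘ i and β = P ∘ j, which are bialgebra maps out of U^cop and V, and
   expanding (1 ⊗ y)(m ⊗ 1) with the multiplication of D gives
     β(y) α(m) = ρ⁻¹(m₁, y₃) ρ(m₃, y₁) α(m₂) β(y₂).
   Conversely a pair of bialgebra maps obeying this rule defines the bialgebra map
   m ⊗ x ↦ α(m) β(x). Part (i) is the case α = id, part (ii) the case β = id. *)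

From HB Require Import structures.
From mathcomp Require Import all_boot all_order all_algebra.
From mathcomp Require boolp classical_sets.
Import GRing.Theory.
Local Open Scope ring_scope.

Set Implicit Arguments.
Unset Strict Implicit.
Unset Printing Implicit Defensive.

Section LinearMaps.
Variable k : fieldType.
Implicit Types A B W : lmodType k.

Lemma linD A W (f : A -> W) : lin f -> {morph f : a b / a + b}.
Proof. by move=> fL a b; have := fL 1 a b; rewrite !scale1r. Qed.

Lemma lin0 A W (f : A -> W) : lin f -> f 0 = 0.
Proof. by move=> fL; apply: (addIr (f 0)); rewrite -linD // !add0r. Qed.

Lemma linZ A W (f : A -> W) c a : lin f -> f (c *: a) = c *: f a.
Proof. by move=> fL; have := fL c a 0; rewrite !addr0 lin0 // addr0. Qed.

Lemma lin_sum A W (f : A -> W) I (r : seq I) (F : I -> A) :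
  lin f -> f (\sum_(i <- r) F i) = \sum_(i <- r) f (F i).
Proof. by move=> fL; apply: big_morph; [apply: linD | apply: lin0]. Qed.

Lemma lin_sumZ A W (f : A -> W) I (r : seq I) (c : I -> k) (F : I -> A) :
  lin f -> f (\sum_(i <- r) c i *: F i) = \sum_(i <- r) c i *: f (F i).
Proof. by move=> fL; rewrite lin_sum //; apply: eq_bigr => i _; rewrite linZ. Qed.

Lemma lin_sum_fun A W I (r : seq I) (F : I -> A -> W) :
  (forall i, lin (F i)) -> lin (fun a => \sum_(i <- r) F i a).
Proof.
by move=> FL c a a'; rewrite scaler_sumr -big_split; apply: eq_bigr => i _; apply: FL.
Qed.

Lemma lin_comp A B W (f : B -> W) (g : A -> B) :
  lin f -> lin g -> lin (fun a => f (g a)).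
Proof. by move=> fL gL c a a'; rewrite gL fL. Qed.

Lemma lin_scalel A W (f : A -> k) (w : W) :
  linf f -> lin (fun a => f a *: w).
Proof. by move=> fL c a a'; rewrite fL scalerDl scalerA. Qed.

Lemma lin_scaler A W (f : A -> W) (c : k) : lin f -> lin (fun a => c *: f a).
Proof. by move=> fL d a a'; rewrite fL scalerDr !scalerA mulrC. Qed.

Lemma lin_mull (R : algType k) (u : R) : lin (fun a : R => u * a).
Proof. by move=> c a a'; rewrite mulrDr scalerAr. Qed.

Lemma lin_mulr (R : algType k) (u : R) : lin (fun a : R => a * u).
Proof. by move=> c a a'; rewrite mulrDl scalerAl. Qed.

Lemma bilinP A B W (F : A -> B -> W) :
  bilin F <-> (forall b, lin (F^~ b)) /\ (forall a, lin (F a)).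
Proof.
rewrite /bilin /lin; split=> -[FL FR].
  by split=> *; [apply: FL | apply: FR].
by split=> *; [apply: FL | apply: FR].
Qed.

(* [linf f] is [lin f] for the regular module [k^o], so the [lin] lemmas apply to forms. *)
Lemma linf_sum A (f : A -> k) I (r : seq I) (F : I -> A) :
  linf f -> f (\sum_(i <- r) F i) = \sum_(i <- r) f (F i).
Proof. exact: (lin_sum (W := k^o)). Qed.

Lemma linfZ A (f : A -> k) c a : linf f -> f (c *: a) = c * f a.
Proof. exact: (linZ (W := k^o)). Qed.

Lemma bilinfP A B (F : A -> B -> k) :
  bilinf F <-> (forall b, linf (F^~ b)) /\ (forall a, linf (F a)).
Proof. exact: (bilinP (W := k^o)). Qed.

Lemma linf_mull A (f : A -> k) (c : k) : linf f -> linf (fun a => c * f a).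
Proof. by move=> fL d a a'; rewrite fL mulrDr mulrCA. Qed.

Lemma linf_mulr A (f : A -> k) (c : k) : linf f -> linf (fun a => f a * c).
Proof. by move=> fL d a a'; rewrite fL mulrDl mulrA. Qed.

End LinearMaps.

Section LinearFormSeparation.
Import boolp classical_sets.
Local Open Scope classical_set_scope.
Variables (k : fieldType) (W : lmodType k).

Definition partial_linf_graph (G : set (W * k)) : Prop :=
  (forall x a b, G (x, a) -> G (x, b) -> a = b) /\
  (forall c x y a b, G (x, a) -> G (y, b) -> G (c *: x + y, c * a + b)).

Lemma partial_linf_graph_bigcup (F : set (set (W * k))) :
  F `<=` partial_linf_graph -> total_on F subset ->
  partial_linf_graph (\bigcup_(G in F) G).
Proof.
move=> Fgraph Ftot; have common G1 G2 p q : F G1 -> F G2 -> G1 p -> G2 q ->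
    exists2 G, F G & G p /\ G q.
  move=> FG1 FG2 G1p G2q; have [G12|G21] := Ftot _ _ FG1 FG2.
    by exists G2 => //; split=> //; apply: G12.
  by exists G1 => //; split=> //; apply: G21.
split=> [x a b|c x y a b] /= [G1 FG1 G1xa] [G2 FG2 G2y].
  have [G FG [Gxa Gxb]] := common _ _ _ _ FG1 FG2 G1xa G2y.
  by have [Gfun _] := Fgraph _ FG; apply: Gfun Gxa Gxb.
have [G FG [Gxa Gyb]] := common _ _ _ _ FG1 FG2 G1xa G2y.
by exists G => //; have [_ Glin] := Fgraph _ FG; apply: Glin.
Qed.

Definition extend0 (G : set (W * k)) (v : W) : set (W * k) :=
  [set p | exists x a t, G (x, a) /\ p = (x + t *: v, a)].

Lemma extend0_graph (G : set (W * k)) (v : W) :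
  partial_linf_graph G -> ~ (exists a, G (v, a)) ->
  partial_linf_graph (extend0 G v).
Proof.
move=> [Gfun Glin] nGv.
have Gsub x a y b : G (x, a) -> G (y, b) -> G (x - y, a - b).
  by move=> Gxa Gyb; have := Glin (-1) _ _ _ _ Gyb Gxa; rewrite scaleN1r mulN1r !(addrC (- _)).
have Gscale c x a : G (x, a) -> G (c *: x, c * a).
  by move=> Gxa; have := Gsub _ _ _ _ (Glin c _ _ _ _ Gxa Gxa) Gxa; rewrite !addrK.
split=> [z a b|c z z' a b].
  move=> [x [{}a [t [Gxa [-> ->]]]]] [x' [{}b [t' [Gxb [Ez ->]]]]].
  have tt' : t = t'.
    apply/eqP; rewrite -subr_eq0; apply/negP => /negP tt'.
    have Ev : v = (t - t')^-1 *: (x' - x).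
      have <- : (t - t') *: v = x' - x.
        by rewrite scalerBl -(addKr x (t *: v)) Ez addrA addrK addrC.
      by rewrite scalerA mulVf ?scale1r.
    by apply: nGv; exists ((t - t')^-1 * (b - a)); rewrite Ev; apply/Gscale/Gsub.
  move: Ez; rewrite tt' => /addIr Exx.
  by apply: Gfun Gxa _; rewrite Exx.
move=> [x [{}a [t [Gxa [-> ->]]]]] [y [{}b [s [Gyb [-> ->]]]]].
exists (c *: x + y), (c * a + b), (c * t + s); split; first exact: Glin.
by rewrite scalerDr scalerDl scalerA addrACA.
Qed.

Lemma maximal_partial_linf_graph (w : W) : w != 0 ->
  exists2 A, partial_linf_graph A /\ A (w, 1) &
    forall B, partial_linf_graph B -> A `<=` B -> B `<=` A.
Proof.
move=> w0; pose good G := partial_linf_graph G /\ G (w, 1).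
pose line := [set p | exists t, p = (t *: w, t)].
have line_good : good line.
  split; last by exists 1; rewrite scale1r.
  split=> [x a b [t [-> ->]] [t' [/eqP]]|c x y a b [t [-> ->]] [s [-> ->]]].
    by rewrite -subr_eq0 -scalerBl scaler_eq0 (negbTE w0) orbF subr_eq0 => /eqP -> ->.
  by exists (c * t + s); rewrite scalerDl scalerA.
have [| | |[A gA] Amax] := @ZL_preorder {G | good G} (exist _ _ line_good)
                             (fun G1 G2 => `[< sval G1 `<=` sval G2 >]).
- by move=> G; apply/asboolP.
- by move=> ? ? ? /asboolP G12 /asboolP G23; apply/asboolP/(subset_trans G12).
- move=> F Ftot; have [[G0 FG0]|nF] := pselect (exists G, F G); last first.
    by exists (exist _ _ line_good) => G FG; case: nF; exists G.
  pose UF := \bigcup_(G in [set sval G | G in F]) G.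
  have gUF : good UF.
    split; last by exists (sval G0); [exists G0 | case: (svalP G0)].
    apply: partial_linf_graph_bigcup => [_ [G _ <-]|_ _ [G1 FG1 <-] [G2 FG2 <-]].
      by case: (svalP G).
    by case: (Ftot _ _ FG1 FG2) => /asboolP; [left|right].
  by exists (exist _ _ gUF) => G FG; apply/asboolP => p Gp; exists (sval G) => //; exists G.
exists A => // B Bgraph AB.
have gB : good B by split=> //; apply: AB; have [] := gA.
by have /asboolP := Amax (exist _ _ gB) (asboolT AB).
Qed.

Lemma exists_linf_eq1 (w : W) : w != 0 -> exists2 phi : W -> k, linf phi & phi w = 1.
Proof.
move=> /maximal_partial_linf_graph[A [[Afun Alin] Aw1] Amax].
have A00 : A (0, 0) by have := Alin (-1) _ _ _ _ Aw1 Aw1; rewrite scaleN1r mulN1r !addNr.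
have Adom v : exists a, A (v, a).
  apply: contrapT => nAv.
  have AB : A `<=` extend0 A v by move=> [x a] Axa; exists x, a, 0; rewrite scale0r addr0.
  have /(_ (v, 0)) := Amax _ (extend0_graph (conj Afun Alin) nAv) AB.
  by move=> Av0; apply: nAv; exists 0; apply: Av0; exists 0, 0, 1; rewrite add0r scale1r.
pose phi v := projT1 (cid (Adom v)).
have Aphi v : A (v, phi v) by rewrite /phi; case: cid.
exists phi; last exact: Afun (Aphi w) Aw1.
by move=> c x y; apply: Afun (Aphi _) (Alin _ _ _ _ _ (Aphi x) (Aphi y)).
Qed.

End LinearFormSeparation.

Lemma teq2_sum (k : fieldType) (A B W : lmodType k) (s s' : seq (A * B))
    (F : A -> B -> W) :
  teq2 s s' -> bilin F -> \sum_(p <- s) F p.1 p.2 = \sum_(p <- s') F p.1 p.2.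
Proof.
move=> ss' /bilinP[FL FR]; apply/eqP; rewrite -subr_eq0; apply/eqP.
set x := _ - _; have [//|/exists_linf_eq1[phi phiL phix]] := eqVneq x 0.
have phiF : bilinf (fun a b => phi (F a b)).
  by apply/(bilinP (W := k^o)); split=> *; apply: (lin_comp (W := k^o)).
have := phiL (-1) (\sum_(p <- s') F p.1 p.2) (\sum_(p <- s) F p.1 p.2).
rewrite scaleN1r addrC -/x phix !linf_sum // (ss' _ phiF) mulN1r addNr.
by move/eqP; rewrite oner_eq0.
Qed.

Section BialgebraFacts.
Variables (k : fieldType) (A : algType k) (d : A -> seq (A * A)) (e : A -> k).
Hypothesis Ab : is_bialg d e.

Lemma comul_sum_lin (W : lmodType k) (F : A -> A -> W) :
  bilin F -> lin (fun x => \sum_(p <- d x) F p.1 p.2).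
Proof.
move=> /[dup] Fb /bilinP[FL _] c x y; have [dL _] := Ab.
rewrite (teq2_sum (dL c x y) Fb) big_cat big_map scaler_sumr /=.
by congr (_ + _); apply: eq_bigr => p _; exact: linZ (FL p.2).
Qed.

Lemma comul1_sum (W : lmodType k) (F : A -> A -> W) :
  bilin F -> \sum_(p <- d 1) F p.1 p.2 = F 1 1.
Proof.
by move=> Fb; have [_ [_ [_ [_ [_ [_ [d1 _]]]]]]] := Ab; rewrite (teq2_sum d1 Fb) big_seq1.
Qed.

Lemma comul1_sumf (F : A -> A -> k) :
  bilinf F -> \sum_(p <- d 1) F p.1 p.2 = F 1 1.
Proof. exact: (comul1_sum (W := k^o)). Qed.

Lemma sw3_1_sum (W : lmodType k) (G : A -> A -> A -> W) :
  (forall b c, lin (fun a => G a b c)) -> (forall a c, lin (fun b => G a b c)) ->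
  (forall a b, lin (G a b)) ->
  \sum_(t <- sw3 d 1) G t.1.1 t.1.2 t.2 = G 1 1 1.
Proof.
move=> G1 G2 G3; rewrite /sw3 big_allpairs_dep /=.
rewrite (comul1_sum (F := fun a c => \sum_(q <- d a) G q.1 q.2 c)).
  by rewrite (comul1_sum (F := fun a b => G a b 1)) //; apply/bilinP.
apply/bilinP; split=> [c|a]; last exact: lin_sum_fun.
by apply: (comul_sum_lin (F := fun a b => G a b c)); apply/bilinP.
Qed.

Lemma sw3_counit_sum (W : lmodType k) (F : A -> W) x :
  lin F -> \sum_(t <- sw3 d x) (e t.1.1 * e t.2) *: F t.1.2 = F x.
Proof.
move=> FL; have [_ [_ [e1 [e2 _]]]] := Ab.
rewrite /sw3 big_allpairs_dep -{2}(e2 x) lin_sumZ //; apply: eq_bigr => p _.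
by rewrite -{2}(e1 p.1) lin_sumZ // scaler_sumr; apply: eq_bigr => q _; rewrite scalerA mulrC.
Qed.

Lemma is_bialg_cop : is_bialg (cop d) e.
Proof.
have [dL [dA [e1 [e2 [eL [dM [d1 [eM e11]]]]]]]] := Ab.
have flip (f : A -> A -> k) : bilinf f -> bilinf (fun a b => f b a).
  by case=> fL fR; split=> *; [apply: fR | apply: fL].
split=> [c x y f /[dup] fb /bilinfP[fL fR]|].
  rewrite /cop big_cat !big_map (dL c x y _ (flip f fb)) big_cat big_map /=.
  by congr (_ + _); apply: eq_bigr => p _; rewrite (linfZ _ _ (fL _)) (linfZ _ _ (fR _)).
split=> [x f [f1 [f2 f3]]|].
  have g3 : trilinf (fun a b c => f c b a).
    by split; [|split] => *; [apply: f3 | apply: f2 | apply: f1].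
  have := dA x _ g3; rewrite /sw3 /cop !big_allpairs_dep !big_map /= => E.
  under eq_bigr do rewrite big_map; under [RHS]eq_bigr do rewrite big_map.
  by rewrite E.
split=> [x|]; first by rewrite big_map; apply: e2.
split=> [x|]; first by rewrite big_map; apply: e1.
split=> //; split=> [x y f fb|].
  rewrite /cop big_map (dM x y _ (flip f fb)) !big_allpairs_dep big_map /=.
  by apply: eq_bigr => p _; rewrite big_map.
split=> // f fb.
by rewrite /cop big_map (d1 _ (flip f fb)) !big_seq1.
Qed.

End BialgebraFacts.

Lemma bialg_map_id (k : fieldType) (A : algType k) (d : A -> seq (A * A)) (e : A -> k) :
  bialg_map d e d e id.
Proof.
split=> [c a a' //|]; do 3!split=> //.
by move=> x f _; rewrite big_map.
Qed.

Section DoubleCrossProduct.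
Variables (k : fieldType) (U V : algType k).
Variables (dU : U -> seq (U * U)) (eU : U -> k) (dV : V -> seq (V * V)) (eV : V -> k).
Variables rho rinv : U -> V -> k.
Hypotheses (Ub : is_bialg dU eU) (Vb : is_bialg dV eV).
Hypotheses (rhoP : is_pairing dU eU dV eV rho) (rinvP : conv_inverse dU eU dV eV rho rinv).

Let rhoL x : linf (rho^~ x). Proof. by case: rhoP => /bilinfP[]. Qed.
Let rhoR m : linf (rho m). Proof. by case: rhoP => /bilinfP[]. Qed.
Let rinvL x : linf (rinv^~ x). Proof. by case: rinvP => /bilinfP[]. Qed.
Let rinvR m : linf (rinv m). Proof. by case: rinvP => /bilinfP[]. Qed.
Let rho1x x : rho 1 x = eV x. Proof. by case: rhoP => _ [_ [_ []]]. Qed.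
Let rhox1 m : rho m 1 = eU m. Proof. by case: rhoP => _ [_ [_ []]]. Qed.

Lemma conv_inv_1l x : rinv 1 x = eV x.
Proof.
have [_ [_ [_ [e2 _]]]] := Vb.
have [_ [_ /(_ 1 x)]] := rinvP; rewrite /conv.
have [_ [_ [_ [_ [_ [_ [_ [_ ->]]]]]]]] := Ub; rewrite mul1r => <-.
rewrite (comul1_sumf Ub (F := fun a b => \sum_(q <- dV x) rinv b q.1 * rho a q.2)).
  rewrite -{1}(e2 x) linf_sum //.
  by apply: eq_bigr => q _; rewrite (linfZ _ _ (rinvR 1)) rho1x mulrC.
apply/bilinfP; split=> [b|a]; apply: (lin_sum_fun (W := k^o)) => q.
  exact: linf_mull (rhoL q.2).
exact: linf_mulr (rinvL q.1).
Qed.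

Lemma conv_inv_1r m : rinv m 1 = eU m.
Proof.
have [_ [_ [e1 _]]] := Ub.
have [_ [_ /(_ m 1)]] := rinvP; rewrite /conv.
have [_ [_ [_ [_ [_ [_ [_ [_ ->]]]]]]]] := Vb; rewrite mulr1 => <-.
rewrite -{1}(e1 m); have /= -> := linf_sum (dU m) (fun p => eU p.1 *: p.2) (rinvL 1).
apply: eq_bigr => p _; rewrite (linfZ _ _ (rinvL 1)) mulrC -rhox1; symmetry.
apply: (comul1_sumf Vb (F := fun a b => rinv p.2 a * rho p.1 b)).
apply/bilinfP; split=> [b|a]; first exact: linf_mulr (rinvR p.2).
exact: linf_mull (rhoR p.1).
Qed.

Section MapsOutOfD.
Variables (W : algType k) (dW : W -> seq (W * W)) (eW : W -> k) (P : U -> V -> W).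
Hypothesis PD : D_bialg_map dU eU dV eV rho rinv dW eW P.

Let PL x : lin (P^~ x). Proof. by case: PD => /bilinP[]. Qed.
Let PR m : lin (P m). Proof. by case: PD => /bilinP[]. Qed.

Lemma D_mul_unitr m x y : P m x * P 1 y = P m (x * y).
Proof.
have [_ [_ [-> _]]] := PD.
rewrite (sw3_1_sum Ub (G := fun a b c => \sum_(s <- sw3 dV x)
           (rho c s.1.1 * rinv a s.2) *: P (m * b) (s.1.2 * y))); last 3 first.
- by move=> b c; apply: lin_sum_fun => s; exact/lin_scalel/linf_mull/rinvL.
- by move=> a c; apply: lin_sum_fun => s; exact/lin_scaler/(lin_comp (PL _) (lin_mull m)).
- by move=> a b; apply: lin_sum_fun => s; exact/lin_scalel/linf_mulr/rhoL.
rewrite mulr1 -(sw3_counit_sum Vb (F := fun u => P m (u * y))).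
  by apply: eq_bigr => s _; rewrite rho1x conv_inv_1l.
exact: lin_comp (PR m) (lin_mulr y).
Qed.

Lemma D_mul_unitl m n y : P m 1 * P n y = P (m * n) y.
Proof.
have [_ [_ [-> _]]] := PD.
rewrite -(sw3_counit_sum Ub (F := fun u => P (m * u) y)); last first.
  exact: lin_comp (PL y) (lin_mull m).
apply: eq_bigr => t _.
rewrite (sw3_1_sum Vb (G := fun a b c =>
           (rho t.2 a * rinv t.1.1 c) *: P (m * t.1.2) (b * y))); last 3 first.
- by move=> b c; exact/lin_scalel/linf_mulr/rhoR.
- by move=> a c; exact/lin_scaler/(lin_comp (PR _) (lin_mulr y)).
- by move=> a b; exact/lin_scalel/linf_mull/rinvR.
by rewrite rhox1 conv_inv_1r mul1r mulrC.
Qed.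

Lemma D_map_factor m x : P m x = P m 1 * P 1 x.
Proof. by rewrite D_mul_unitr mul1r. Qed.

Lemma D_map_commute m y :
  P 1 y * P m 1 =
  \sum_(t <- sw3 dU m) \sum_(s <- sw3 dV y)
     (rinv t.1.1 s.2 * rho t.2 s.1.1) *: (P t.1.2 1 * P 1 s.1.2).
Proof.
have [_ [_ [-> _]]] := PD.
apply: eq_bigr => t _; apply: eq_bigr => s _.
by rewrite mul1r mulr1 -D_map_factor [rho _ _ * _]mulrC.
Qed.

Lemma D_bialg_map_j : bialg_map dV eV dW eW (P 1).
Proof.
have [_ [P11 [_ [Pe Pcomul]]]] := PD.
have [_ [_ [_ [_ [_ [_ [_ [_ eU1]]]]]]]] := Ub.
split; first exact: PR.
split=> [x y|]; first by rewrite D_mul_unitr.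
split=> //; split=> [x|x f /[dup] fb /bilinfP[fL fR]]; first by rewrite Pe eU1 mul1r.
rewrite (Pcomul 1 x f fb) big_allpairs_dep big_map.
rewrite (comul1_sumf Ub (F := fun a b => \sum_(q <- dV x) f (P b q.1) (P a q.2))) //.
apply/bilinfP; split=> [b|a]; apply: (lin_sum_fun (W := k^o)) => q.
  exact: (lin_comp (W := k^o) (fR _) (PL _)).
exact: (lin_comp (W := k^o) (fL _) (PL _)).
Qed.

Lemma D_bialg_map_i : bialg_map (cop dU) eU dW eW (P^~ 1).
Proof.
have [_ [P11 [_ [Pe Pcomul]]]] := PD.
have [_ [_ [_ [_ [_ [_ [_ [_ eV1]]]]]]]] := Vb.
split; first exact: PL.
split=> [m n|]; first by rewrite D_mul_unitl.
split=> //; split=> [m|m f /[dup] fb /bilinfP[fL fR]]; first by rewrite Pe eV1 mulr1.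
rewrite (Pcomul m 1 f fb) /cop big_allpairs_dep !big_map; apply: eq_bigr => p _.
rewrite (comul1_sumf Vb (F := fun a b => f (P p.2 a) (P p.1 b))) //.
apply/bilinfP; split=> [b|a].
  exact: (lin_comp (W := k^o) (fL _) (PR _)).
exact: (lin_comp (W := k^o) (fR _) (PR _)).
Qed.

End MapsOutOfD.

Section CommutingPair.
Variables (W : algType k) (dW : W -> seq (W * W)) (eW : W -> k).
Variables (alpha : U -> W) (beta : V -> W).
Hypotheses (Wb : is_bialg dW eW) (alphaB : bialg_map (cop dU) eU dW eW alpha).
Hypothesis betaB : bialg_map dV eV dW eW beta.
Hypothesis beta_alpha_commute : forall y m,
  beta y * alpha m =
  \sum_(t <- sw3 dU m) \sum_(s <- sw3 dV y)
     (rinv t.1.1 s.2 * rho t.2 s.1.1) *: (alpha t.1.2 * beta s.1.2).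

Lemma D_bialg_map_mul :
  D_bialg_map dU eU dV eV rho rinv dW eW (fun m x => alpha m * beta x).
Proof.
have [aL [aM [a1 [ae aD]]]] := alphaB.
have [bL [bM [b1 [be bD]]]] := betaB.
have [_ [_ [_ [_ [_ [dWM [_ [eWM _]]]]]]]] := Wb.
split.
  apply/bilinP; split=> [x|m]; first exact: lin_comp (lin_mulr _) aL.
  exact: lin_comp (lin_mull _) bL.
split; first by rewrite a1 b1 mulr1.
split=> [m x n y|].
  rewrite mulrA -(mulrA (alpha m)) beta_alpha_commute mulr_sumr mulr_suml.
  apply: eq_bigr => t _; rewrite mulr_sumr mulr_suml; apply: eq_bigr => s _.
  by rewrite aM bM -scalerAr -scalerAl !mulrA [rinv _ _ * _]mulrC.
split=> [m x|m x f /[dup] fb /bilinfP[fL fR]]; first by rewrite eWM ae be.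
rewrite (dWM _ _ f fb) !big_allpairs_dep /=.
have Fb : bilinf (fun a b => \sum_(q <- dW (beta x)) f (a * q.1) (b * q.2)).
  apply/bilinfP; split=> [b|a]; apply: (lin_sum_fun (W := k^o)) => q.
    exact: (lin_comp (W := k^o) (fL _) (lin_mulr _)).
  exact: (lin_comp (W := k^o) (fR _) (lin_mulr _)).
have /= -> := aD m _ Fb.
rewrite /cop !big_map; apply: eq_bigr => p _.
have Gb : bilinf (fun a b => f (alpha p.2 * a) (alpha p.1 * b)).
  apply/bilinfP; split=> [b|a].
    exact: (lin_comp (W := k^o) (fL _) (lin_mull _)).
  exact: (lin_comp (W := k^o) (fR _) (lin_mull _)).
by have /= -> := bD x _ Gb; rewrite big_map.
Qed.

End CommutingPair.

End DoubleCrossProduct.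

Theorem mainTheorem3 (k : fieldType) (U V : algType k)
    (dU : U -> seq (U * U)) (eU : U -> k)
    (dV : V -> seq (V * V)) (eV : V -> k)
    (rho rinv : U -> V -> k) :
  is_bialg dU eU -> is_bialg dV eV ->
  is_pairing dU eU dV eV rho ->
  conv_inverse dU eU dV eV rho rinv ->
  (* (i) bialgebra map pi : D -> U^cop with pi o i = Id *)
  ((exists P : U -> V -> U,
       D_bialg_map dU eU dV eV rho rinv (cop dU) eU P /\
       (forall m, P m 1 = m))
   <->
   (exists g : V -> U,
       bialg_map dV eV (cop dU) eU g /\
       (forall (y : V) (m : U),
          g y * m =
          \sum_(t <- sw3 dU m) \sum_(s <- sw3 dV y)
             (rinv t.1.1 s.2 * rho t.2 s.1.1) *: (t.1.2 * g s.1.2))))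
  /\
  (* (ii) bialgebra map D -> V left inverse to j *)
  ((exists Q : U -> V -> V,
       D_bialg_map dU eU dV eV rho rinv dV eV Q /\
       (forall x, Q 1 x = x))
   <->
   (exists mu : U -> V,
       bialg_map (cop dU) eU dV eV mu /\
       (forall (y : V) (m : U),
          y * mu m =
          \sum_(t <- sw3 dU m) \sum_(s <- sw3 dV y)
             (rinv t.1.1 s.2 * rho t.2 s.1.1) *: (mu t.1.2 * s.1.2)))).
Proof.
move=> Ub Vb rhoP rinvP; split; split.
- case=> P [PD Pm1]; exists (P 1); split; first exact: D_bialg_map_j PD.
  move=> y m; rewrite -{1}(Pm1 m) (D_map_commute Ub Vb rhoP rinvP PD).
  by apply: eq_bigr => t _; apply: eq_bigr => s _; rewrite Pm1.
- case=> g [gB g_commute]; exists (fun m x => m * g x).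
  split; last by case: gB => _ [_ [-> _]] m; rewrite mulr1.
  exact: D_bialg_map_mul (is_bialg_cop Ub) (bialg_map_id _ _) gB g_commute.
- case=> Q [QD Q1x]; exists (Q^~ 1); split; first exact: D_bialg_map_i QD.
  move=> y m; rewrite -{1}(Q1x y) (D_map_commute Ub Vb rhoP rinvP QD).
  by apply: eq_bigr => t _; apply: eq_bigr => s _; rewrite Q1x.
- case=> mu [muB mu_commute]; exists (fun m x => mu m * x).
  split; last by case: muB => _ [_ [-> _]] x; rewrite mul1r.
  exact: D_bialg_map_mul Vb muB (bialg_map_id _ _) mu_commute.
Qed.
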